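(* Let $k,t\ge1$ and $r\ge1$ be integers and let $G$ be the $(k,t)$-split graph with $r$ parts. If $r=1$ and $t\ge2$, then $a(G)=\kappa(G)$. If $r\ge2$, then $a(G)\ne\kappa(G)$.
   Context: For integers $k,t,r\ge1$, the $(k,t)$-split graph with $r$ parts is the graph whose vertex set is the disjoint union $S_1\cup\dots\cup S_r\cup A_1\cup\dots\cup A_r$ with $|S_i|=k$ and $|A_i|=t$, where $S_1\cup\dots\cup S_r$ is a clique, $A_1\cup\dots\cup A_r$ is an independent set, and each vertex of $A_i$ is adjacent exactly to the vertices of $S_i$. The Laplacian matrix is $L(G)=D(G)-A(G)$; $a(G)$, the algebraic connectivity, is its second smallest eigenvalue (with multiplicity). $\kappa(G)$ is the vertex connectivity of $G$ (minimum size of a vertex set whose removal disconnects $G$). *)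

From HB Require Import structures.
From mathcomp Require Import all_boot all_order all_algebra algC.
Set Implicit Arguments. Unset Strict Implicit. Unset Printing Implicit Defensive.
Import Order.TTheory GRing.Theory Num.Theory.

(* A simple graph is given by a symmetric irreflexive boolean relation [e]. *)

Section Graph.
Variables (V : finType) (e : rel V).
Local Open Scope ring_scope.

Definition gdeg (x : V) : nat := #|[set y | e x y]|.

(* Laplacian L = D - A, indexed by 'I_#|V| via the canonical enumeration of V *)
Definition laplacian : 'M[algC]_#|V| :=
  \matrix_(i, j)
    (if i == j then (gdeg (enum_val i))%:R
     else - (e (enum_val i) (enum_val j))%:R).

(* Laplacian eigenvalues with multiplicity: the roots (with multiplicity) of
   the characteristic polynomial, sorted increasingly.  (They are all real,
   L being real symmetric, so the sort uses a total order on them.) *)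
Definition lap_eigs : seq algC :=
  sort <=%R (sval (closed_field_poly_normal (char_poly laplacian))).

Definition alg_conn : algC := nth 0 lap_eigs 1.

Definition disconnects (S : {set V}) : bool :=
  [exists x, exists y,
    [&& x \notin S, y \notin S &
        ~~ connect [rel u v | [&& e u v, u \notin S & v \notin S]] x y]].

(* vertex connectivity: minimum size of a disconnecting vertex set
   (convention |V|-1 if there is none, i.e. for complete graphs). *)
Definition vconn : nat :=
  (\big[minn/#|V|.-1]_(S : {set V} | disconnects S) #|S|)%N.

End Graph.

(* Vertex (i, inl a) is the a-th vertex of S_i (|S_i| = k);
   vertex (i, inr c) is the c-th vertex of A_i (|A_i| = t). *)
Definition split_vertex (k t r : nat) : finType :=
  ('I_r * ('I_k + 'I_t))%type.

Definition split_adj (k t r : nat) : rel (split_vertex k t r) :=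
  fun u v =>
    match u.2, v.2 with
    | inl _, inl _ => u != v          (* S_1 u ... u S_r is a clique *)
    | inl _, inr _ => u.1 == v.1      (* A_i joined exactly to S_i *)
    | inr _, inl _ => u.1 == v.1
    | inr _, inr _ => false           (* A_1 u ... u A_r independent *)
    end.

From HB Require Import structures.
From mathcomp Require Import all_boot all_order all_algebra algC.
From mathcomp Require Import ring zify.
Import Order.TTheory GRing.Theory Num.Theory.
Set Implicit Arguments. Unset Strict Implicit. Unset Printing Implicit Defensive.
Local Open Scope ring_scope.

(* Removing a clique part S_i isolates the vertices of
   A_i, while a set of fewer than k vertices leaves a survivor in every
   clique part, and the survivors (a clique) reach every remaining vertex.
   Hence kappa(G) = k for all k, t, r >= 1 (when r = t = 1 the graph is
   complete and the convention kappa = |V| - 1 = k applies).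

   The Laplacian is real symmetric, so the roots of
   its characteristic polynomial are the (real) diagonal entries of a
   spectral decomposition; a function f : V -> C with L f = lam f and f <> 0
   certifies lam as a root, and the multiplicity of the root 0 is at most
   one as soon as every harmonic function is constant.
   - r = 1: solving L f = lam f on one part shows every eigenvalue lies in
     {0, k, k + t}, harmonic functions are constant, and for t >= 2 the
     difference of two indicators of A_1 is a k-eigenfunction; so the second
     smallest eigenvalue is k = kappa(G).
   - r >= 2: the function (k - mu) delta_i on S_i and k delta_i on A_i, with
     delta a non-constant function of the part of sum zero, is an
     eigenfunction for the smaller root mu of
     x^2 - ((r + 1) k + t) x + r k^2, and 0 < mu < k; so a(G) < k = kappa(G). *)

Section LaplacianAction.
Variables (V : finType) (e : rel V).
Hypotheses (e_sym : symmetric e) (e_irr : irreflexive e).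

Definition lap_apply (f : V -> algC) (y : V) : algC :=
  \sum_x (e x y)%:R * (f y - f x).

Lemma lap_apply_ext f g y : f =1 g -> lap_apply f y = lap_apply g y.
Proof. by move=> fg; apply: eq_bigr => x _; rewrite !fg. Qed.

Definition fun_of_row (v : 'rV[algC]_#|V|) (x : V) : algC := v 0 (enum_rank x).

Definition row_of_fun (f : V -> algC) : 'rV[algC]_#|V| := \row_j f (enum_val j).

Lemma row_of_funK f : fun_of_row (row_of_fun f) =1 f.
Proof. by move=> x; rewrite /fun_of_row mxE enum_rankK. Qed.

Lemma fun_of_row_eq0 v : fun_of_row v =1 (fun=> 0) -> v = 0.
Proof. by move=> v0; apply/rowP => j; rewrite -(enum_valK j) mxE; apply: v0. Qed.

Lemma gdegE y : gdeg e y = (\sum_x e x y)%N.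
Proof.
rewrite /gdeg -sum1_card big_mkcond /=; apply: eq_bigr => x _.
by rewrite inE e_sym; case: (e x y).
Qed.

Lemma row_mul_laplacian v y :
  (v *m laplacian e) 0 (enum_rank y) = lap_apply (fun_of_row v) y.
Proof.
rewrite mxE (reindex (@enum_rank V)) /=; last exact/onW_bij/enum_rank_bij.
transitivity (\sum_x ((x == y)%:R * (fun_of_row v y * (gdeg e y)%:R)
                      - (e x y)%:R * fun_of_row v x)).
  apply: eq_bigr => x _; rewrite /laplacian mxE !enum_rankK (inj_eq enum_rank_inj).
  case: eqVneq => [->|_]; first by rewrite e_irr mul1r /= mul0r subr0.
  by rewrite /= mul0r sub0r mulrN mulrC.
rewrite sumrB (bigD1 y) //= eqxx mul1r big1 ?addr0; last first.
  by move=> x /negbTE ->; rewrite mul0r.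
rewrite gdegE natr_sum mulr_sumr -sumrB; apply: eq_bigr => x _.
by rewrite mulrBr mulrC.
Qed.

Lemma eigenrowP v lam :
  v *m laplacian e = lam *: v <->
  forall y, lap_apply (fun_of_row v) y = lam * fun_of_row v y.
Proof.
split=> [Hv y | Hf]; first by rewrite -row_mul_laplacian Hv mxE.
by apply/rowP => j; rewrite -(enum_valK j) row_mul_laplacian Hf mxE.
Qed.

End LaplacianAction.

Lemma char_poly_conj n (P A : 'M[algC]_n) : P \in unitmx ->
  char_poly (invmx P *m A *m P) = char_poly A.
Proof.
move=> Pu; set Q := map_mx polyC (invmx P); set Pp := map_mx polyC P.
have QP : Q *m Pp = 1%:M by rewrite -map_mxM mulVmx // map_mx1.
have conjE : char_poly_mx (invmx P *m A *m P) = Q *m char_poly_mx A *m Pp.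
  rewrite /char_poly_mx !map_mxM mulmxBr mulmxBl -/Q -/Pp.
  by congr (_ - _); rewrite -mulmxA -scalar_mxC mulmxA QP mul1mx.
rewrite /char_poly conjE !det_mulmx mulrC mulrA -det_mulmx.
by rewrite [Pp *m Q]mulmx1C ?det1 ?mul1r.
Qed.

Section LaplacianSpectrum.
Variables (V : finType) (e : rel V).
Hypotheses (e_sym : symmetric e) (e_irr : irreflexive e).
Local Notation n := #|V|.
Local Notation L := (laplacian e).
Let P := spectralmx L.
Let d := spectral_diag L.

Definition lap_roots : seq algC :=
  sval (closed_field_poly_normal (char_poly L)).

Lemma alg_connE : alg_conn e = nth 0 (sort <=%R lap_roots) 1.
Proof. by []. Qed.

(* L is a real symmetric matrix, hence Hermitian and unitarily diagonalizable. *)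
Lemma laplacian_hermitian : L \is hermsymmx.
Proof.
apply/is_hermitianmxP; rewrite expr0 scale1r; apply/matrixP => i j.
rewrite !mxE eq_sym; case: eqVneq => [->|_]; first by rewrite rmorph_nat.
by rewrite rmorphN rmorph_nat e_sym.
Qed.

Lemma laplacian_spectral : L = invmx P *m diag_mx d *m P.
Proof. exact/orthomx_spectralP/hermitian_normalmx/laplacian_hermitian. Qed.

Lemma spectral_row_eq0 (v : 'rV[algC]_n) : v *m P = 0 -> v = 0.
Proof.
by move=> /(congr1 (mulmx^~ (invmx P))); rewrite mul0mx mulmxK // spectral_unit.
Qed.

Lemma spectral_row_eigen i : row i P *m L = d 0 i *: row i P.
Proof.
have PL : P *m L = diag_mx d *m P.
  by rewrite {1}laplacian_spectral !mulmxA mulmxV ?spectral_unit // mul1mx.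
by rewrite -row_mul PL row_mul row_diag_mx -scalemxAl -rowE.
Qed.

Lemma lap_roots_prod : char_poly L = \prod_(z <- lap_roots) ('X - z%:P).
Proof.
rewrite /lap_roots; case: closed_field_poly_normal => s /= ->.
by rewrite (monicP (char_poly_monic L)) scale1r.
Qed.

Lemma perm_lap_roots : perm_eq lap_roots [seq d 0 i | i <- enum 'I_n].
Proof.
apply: prod_XsubC_eq; rewrite -lap_roots_prod {1}laplacian_spectral.
rewrite char_poly_conj ?spectral_unit // char_poly_trig ?diag_mx_is_trig //.
by rewrite big_map big_enum /=; apply: eq_bigr => i _; rewrite mxE eqxx mulr1n.
Qed.

Lemma size_lap_roots : size lap_roots = n.
Proof. by rewrite (perm_size perm_lap_roots) size_map size_enum_ord. Qed.

Lemma mem_lap_roots lam : (lam \in lap_roots) = eigenvalue L lam.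
Proof. by rewrite eigenvalue_root_char lap_roots_prod root_prod_XsubC. Qed.

(* In particular all roots are real, so the sort defining alg_conn is a
   genuine increasing order. *)
Lemma lap_roots_real : all (fun x => x \is Num.real) lap_roots.
Proof.
rewrite (perm_all _ perm_lap_roots); apply/allP => x /mapP [i _ ->].
by have /mxOverP := hermitian_spectral_diag_real laplacian_hermitian; apply.
Qed.

Lemma eigenfunction_root f lam x :
  (forall y, lap_apply e f y = lam * f y) -> f x != 0 -> lam \in lap_roots.
Proof.
move=> f_eig fx; rewrite mem_lap_roots; apply/eigenvalueP; exists (row_of_fun f).
  by apply/eigenrowP => // y; rewrite (lap_apply_ext _ _ (row_of_funK f)) row_of_funK.
apply: contra fx => /eqP f0; have := row_of_funK f x; rewrite f0.
by rewrite /fun_of_row mxE => <-.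
Qed.

Lemma root_eigenfunction lam : lam \in lap_roots ->
  exists2 f : V -> algC, (forall y, lap_apply e f y = lam * f y) & exists x, f x != 0.
Proof.
rewrite mem_lap_roots => /eigenvalueP [v /eigenrowP-/(_ e_sym e_irr) v_eig v0].
exists (fun_of_row v) => //; apply/existsP; apply: contraR v0.
by rewrite negb_exists => /forallP v0; apply/eqP/fun_of_row_eq0 => x; apply/eqP/negPn.
Qed.

(* Constant functions are harmonic, so 0 is always a root. *)
Lemma zero_lap_root (x : V) : 0 \in lap_roots.
Proof.
apply: (@eigenfunction_root (fun=> 1) _ x); last by rewrite oner_eq0.
by move=> y; rewrite mul0r /lap_apply big1 // => z _; rewrite subrr mulr0.
Qed.

(* If every harmonic function is constant, 0 is a simple root: two rows of P
   with eigenvalue 0 would be constant, hence proportional, contradicting the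
   invertibility of P. *)
Lemma simple_zero_root :
  (forall f, (forall y, lap_apply e f y = 0) -> forall x y, f x = f y) ->
  (count_mem (0 : algC)%R lap_roots <= 1)%N.
Proof.
move=> harmonic_const.
have row_const m : d 0 m = 0 -> forall a b, P m a = P m b.
  move=> dm a b; rewrite -(enum_valK a) -(enum_valK b).
  have := harmonic_const (fun_of_row (row m P)) _ (enum_val a) (enum_val b).
  rewrite /fun_of_row !mxE; apply=> y.
  by rewrite -row_mul_laplacian // spectral_row_eigen dm scale0r mxE.
have zero_index_uniq i j : d 0 i = 0 -> d 0 j = 0 -> i = j.
  move=> di dj; apply/eqP/negPn/negP => nij.
  have Pii : P i i != 0.
    apply/negP => /eqP Pi0.
    have ei0 : 'e_i = 0 :> 'rV[algC]_n.
      apply: spectral_row_eq0; apply/rowP => m.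
      by rewrite -rowE !mxE (row_const i di m i) Pi0.
    by move/rowP: ei0 => /(_ i); rewrite !mxE !eqxx /= => /eqP; rewrite oner_eq0.
  have comb0 : P j i *: 'e_i - P i i *: 'e_j = 0 :> 'rV[algC]_n.
    apply: spectral_row_eq0; apply/rowP => m; rewrite mulmxBl -!scalemxAl -!rowE !mxE.
    by rewrite (row_const i di m i) (row_const j dj m i) mulrC subrr.
  move/rowP: comb0 => /(_ j); rewrite !mxE eqxx eq_sym (negbTE nij) /=.
  by rewrite eqxx mulr0 mulr1 sub0r => /eqP; rewrite oppr_eq0 (negbTE Pii).
rewrite (permP perm_lap_roots) count_map -size_filter.
case Ez: (filter _ (enum 'I_n)) => [//|i s]; rewrite -Ez.
have : i \in filter (preim (d 0) (pred1 0)) (enum 'I_n) by rewrite Ez mem_head.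
rewrite mem_filter => /andP [/eqP d0i _].
apply: (@uniq_leq_size _ _ [:: i]); first by rewrite filter_uniq ?enum_uniq.
move=> j; rewrite mem_filter mem_seq1 /= => /andP [/eqP dj _].
by rewrite (zero_index_uniq j i).
Qed.

End LaplacianSpectrum.

Section SecondSmallest.
Variable s : seq algC.
Hypothesis s_real : all (fun x => x \is Num.real) s.
Local Notation u := (sort <=%R s).

Lemma sort_real_pairwise : pairwise <=%R u.
Proof.
rewrite -sorted_pairwise; last by move=> ? ? ?; apply: le_trans.
apply: (sort_sorted_in (P := Num.real)) => // x y xr yr; exact: real_leVge.
Qed.

Lemma second_smallest_mem : (1 < size s)%N -> nth 0 u 1 \in s.
Proof. by move=> s_gt1; rewrite -(mem_sort <=%R) mem_nth // size_sort. Qed.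

Lemma second_smallest_le a b : a \in s -> b \in s -> a < b -> nth 0 u 1 <= b.
Proof.
rewrite -[a \in s](mem_sort <=%R) -[b \in s](mem_sort <=%R) => a_in b_in ab.
move: a_in b_in sort_real_pairwise.
case: u => [|x0 [|x1 u']] //=.
  by rewrite !inE => /eqP a0 /eqP b0; move: ab; rewrite a0 b0 ltxx.
rewrite !inE => a_in /or3P [/eqP b0 | /eqP -> // | b_in].
all: case/andP => /andP [x01 /allP x0_le] /andP [/allP x1_le _].
- have x0a : x0 <= a by case/or3P: a_in => [/eqP -> // | /eqP -> // | /x0_le].
  by move: (le_lt_trans x0a ab); rewrite b0 ltxx.
- exact: x1_le.
Qed.

Lemma second_smallest_neq0 : (1 < size s)%N -> (forall x, x \in s -> 0 <= x) ->
  (count_mem (0 : algC)%R s <= 1)%N -> nth 0 u 1 != 0.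
Proof.
move=> s_gt1 s_ge0; rewrite -(permP (permEl (perm_sort <=%R s))).
have u_ge0 x : x \in u -> 0 <= x by rewrite mem_sort; apply: s_ge0.
move: s_gt1 u_ge0 sort_real_pairwise; rewrite -(size_sort <=%R).
case: u => [|x0 [|x1 u']] //= _ u_ge0 /andP [/andP [x01 _] _].
apply: contraTneq => x10; have x00 : x0 = 0.
  by apply/eqP; rewrite eq_le u_ge0 ?mem_head // andbT -x10.
by rewrite x00 x10 eqxx.
Qed.

End SecondSmallest.

Lemma sum_indicator_mul (I : finType) (i : I) (X : I -> algC) :
  \sum_j (j == i)%:R * X j = X i.
Proof.
rewrite (bigD1 i) //= eqxx mul1r big1 ?addr0 // => j /negbTE ->.
by rewrite mul0r.
Qed.

Lemma sum_indicator (I : finType) (i : I) : \sum_j (j == i)%:R = 1 :> algC.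
Proof.
by rewrite -[RHS](sum_indicator_mul i (fun=> 1)); apply: eq_bigr => j _; rewrite mulr1.
Qed.

Section SplitGraph.
Variables k t r : nat.
Local Notation V := (split_vertex k t r).
Local Notation e := (@split_adj k t r).

Lemma split_sym : symmetric e.
Proof.
by case=> [i [a|c]] [j [b|d]]; rewrite /split_adj //= eq_sym.
Qed.

Lemma split_irr : irreflexive e.
Proof. by case=> [i [a|c]]; rewrite /split_adj /= ?eqxx. Qed.

Lemma card_split_vertex : #|V| = (r * (k + t))%N.
Proof. by rewrite card_prod card_sum !card_ord. Qed.

Definition sum_S (f : V -> algC) (i : 'I_r) : algC := \sum_(a < k) f (i, inl a).
Definition sum_A (f : V -> algC) (i : 'I_r) : algC := \sum_(c < t) f (i, inr c).

Lemma sum_split_vertex (F : V -> algC) :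
  \sum_x F x = \sum_j (\sum_(a < k) F (j, inl a) + \sum_(c < t) F (j, inr c)).
Proof.
transitivity (\sum_(p : V) F (p.1, p.2)); first by apply: eq_bigr => -[].
rewrite -(pair_bigA _ (fun j z => F (j, z))) /=.
by apply: eq_bigr => j _; rewrite big_sumType.
Qed.

(* A vertex of A_i sees exactly the k vertices of S_i. *)
Lemma lap_apply_A f i c :
  lap_apply e f (i, inr c) = k%:R * f (i, inr c) - sum_S f i.
Proof.
rewrite /lap_apply sum_split_vertex /split_adj /=.
rewrite (eq_bigr (fun j => (j == i)%:R * \sum_(a < k) (f (i, inr c) - f (j, inl a)))).
  by rewrite sum_indicator_mul sumrB sumr_const card_ord mulr_natl.
move=> j _; rewrite mulr_sumr [X in _ + X]big1 ?addr0 // => c' _.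
by rewrite mul0r.
Qed.

(* A vertex of S_i sees the other r k - 1 clique vertices and A_i. *)
Lemma lap_apply_S f i a :
  lap_apply e f (i, inl a) =
  (r * k + t)%:R * f (i, inl a) - \sum_j sum_S f j - sum_A f i.
Proof.
rewrite /lap_apply sum_split_vertex big_split /=.
have clique j b : (e (j, inl b) (i, inl a))%:R * (f (i, inl a) - f (j, inl b))
                  = f (i, inl a) - f (j, inl b).
  rewrite /split_adj /=; case: eqVneq => [-> | _]; last by rewrite mul1r.
  by rewrite subrr mulr0.
rewrite (eq_bigr (fun j => \sum_(b < k) (f (i, inl a) - f (j, inl b)))); last first.
  by move=> j _; apply: eq_bigr => b _; apply: clique.
rewrite [X in _ + X](eq_bigr
  (fun j => (j == i)%:R * \sum_(c < t) (f (i, inl a) - f (j, inr c)))); last first.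
  by move=> j _; rewrite mulr_sumr.
rewrite sum_indicator_mul sumrB sumr_const card_ord.
under eq_bigr => j _ do rewrite sumrB sumr_const card_ord.
rewrite sumrB sumr_const card_ord /sum_S /sum_A.
rewrite -mulrnA -[_ *+ (k * r)]mulr_natr -[_ *+ t]mulr_natr natrD !natrM; ring.
Qed.

End SplitGraph.

Lemma bigmin_le (I : finType) (P : pred I) (F : I -> nat) x0 i :
  P i -> (\big[minn/x0]_(j | P j) F j <= F i)%N.
Proof.
move=> Pi; rewrite -big_filter.
have : i \in filter P (index_enum I) by rewrite mem_filter Pi mem_index_enum.
elim: (filter P (index_enum I)) => [|y s IH] //=.
rewrite inE big_cons => /orP [/eqP <- | /IH]; first exact: geq_minl.
exact: leq_trans (geq_minr _ _).
Qed.

Lemma connect_isolated (T : finType) (rel_T : rel T) x y :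
  (forall z, ~~ rel_T x z) -> connect rel_T x y -> y = x.
Proof.
move=> x_isolated /connectP [[|z p] /= path_p -> //].
by move: path_p (x_isolated z) => /andP [-> _].
Qed.

Section SplitConnectivity.
Variables k t r : nat.
Local Notation V := (split_vertex k t r).
Local Notation e := (@split_adj k t r).

Definition clique_part (i : 'I_r) : {set V} := [set (i, inl a) | a : 'I_k].

Lemma card_clique_part i : #|clique_part i| = k.
Proof. by rewrite card_imset ?card_ord // => a b [->]. Qed.

Lemma indep_notin_clique_part i j c : ((j, inr c) : V) \notin clique_part i.
Proof. by apply/imsetP => -[a _]. Qed.

Lemma clique_part_disconnects i c (y : V) :
  y \notin clique_part i -> y != (i, inr c) -> disconnects e (clique_part i).
Proof.
move=> y_out y_ne; apply/existsP; exists (i, inr c); apply/existsP; exists y.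
rewrite indep_notin_clique_part y_out /=; apply: contra y_ne => /connect_isolated -> //.
move=> [j [a|d]]; rewrite /= /split_adj //=; apply/negP => /and3P [/eqP <- _].
by rewrite imset_f.
Qed.

(* A set of fewer than k vertices misses a vertex g i of each clique part S_i;
   every remaining vertex is joined to the survivor of its part, and the
   survivors form a clique. *)
Lemma small_set_not_disconnects (S : {set V}) : (#|S| < k)%N -> ~~ disconnects e S.
Proof.
move=> S_small.
have survivor i : exists a, ((i, inl a) : V) \notin S.
  apply/existsP; apply: contraTT S_small; rewrite negb_exists => /forallP inS.
  rewrite -leqNgt -[X in (X <= _)%N](card_clique_part i).
  apply/subset_leq_card/subsetP.
  by move=> x /imsetP [a _ ->]; apply/negbNE/inS.
pose g i : V := (i, inl (xchoose (survivor i))).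
have g_out i : g i \notin S := xchooseP (survivor i).
set rel_S := [rel u v | [&& e u v, u \notin S & v \notin S]].
have rel_S_sym : connect_sym rel_S.
  apply: sym_connect_sym => u v /=; rewrite split_sym.
  by case: (e v u); case: (u \in S); case: (v \in S).
have clique_linked (u v : V) : u \notin S -> v \notin S -> is_inl u.2 -> is_inl v.2 ->
    connect rel_S u v.
  case: u => i [b|//]; case: v => j [b'|//] u_out v_out _ _.
  have [-> | ne] := eqVneq ((i, inl b) : V) (j, inl b'); first exact: connect0.
  by apply: connect1; rewrite /= u_out v_out /split_adj /= ne.
have to_g (x : V) : x \notin S -> connect rel_S x (g x.1).
  case: x => i [b|c] x_out; first exact: clique_linked (g_out i) _ _.
  by apply: connect1; rewrite /= x_out g_out /split_adj /= eqxx.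
apply/existsP => -[x /existsP [y /and3P [x_out y_out /negP]]]; apply.
apply: connect_trans (to_g _ x_out) _.
apply: connect_trans (clique_linked _ _ (g_out _) (g_out _) isT isT) _.
by rewrite rel_S_sym; apply: to_g.
Qed.

(* When r = t = 1 there is no cut of size k, but then |V| - 1 = k. *)
Lemma split_vconn : (0 < k)%N -> (0 < t)%N -> (0 < r)%N -> vconn e = k.
Proof.
move=> k_gt0 t_gt0 r_gt0; apply/eqP; rewrite eqn_leq; apply/andP; split; last first.
  rewrite /vconn; apply: (big_ind (fun m => k <= m)%N) => [|m1 m2|S].
  - by rewrite card_split_vertex; nia.
  - by rewrite leq_min => -> ->.
  - by apply: contraLR; rewrite -ltnNge; apply: small_set_not_disconnects.
have cut_le i c (y : V) : y \notin clique_part i -> y != (i, inr c) -> (vconn e <= k)%N.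
  move=> y_out y_ne; rewrite -[X in (_ <= X)%N](card_clique_part i).
  exact: bigmin_le (clique_part_disconnects y_out y_ne).
pose i0 : 'I_r := Ordinal r_gt0; pose c0 : 'I_t := Ordinal t_gt0.
have [t_gt1 | t_le1] := ltnP 1 t.
  by apply: (cut_le i0 c0 (i0, inr (Ordinal t_gt1))); rewrite ?indep_notin_clique_part.
have [r_gt1 | r_le1] := ltnP 1 r.
  by apply: (cut_le i0 c0 (Ordinal r_gt1, inr c0)); rewrite ?indep_notin_clique_part.
rewrite /vconn; apply: (big_ind (fun m => m <= k)%N) => [|m1 m2 m1k _|S].
- by rewrite card_split_vertex; nia.
- by rewrite geq_min m1k.
case/existsP => x /existsP [y /and3P [x_out _ _]].
apply: leq_trans (subset_leq_card (_ : S \subset [set~ x])) _.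
  by apply/subsetP => z zS; rewrite !inE; apply: contraNneq x_out => <-.
by rewrite cardsC1 card_split_vertex; nia.
Qed.

End SplitConnectivity.

Section OnePartEigenfunction.
Variables k t : nat.
Hypothesis k_gt0 : (0 < k)%N.
Local Notation V := (split_vertex k t 1).
Local Notation e := (@split_adj k t 1).
Variables (f : V -> algC) (lam : algC).
Hypothesis f_eig : forall y, lap_apply e f y = lam * f y.
Let sS := sum_S f ord0.
Let sA := sum_A f ord0.

Lemma one_part_eig_A c : (k%:R - lam) * f (ord0, inr c) = sS.
Proof. by rewrite mulrBl -f_eig lap_apply_A /sS; ring. Qed.

Lemma one_part_eig_S a : ((k + t)%:R - lam) * f (ord0, inl a) = sS + sA.
Proof.
rewrite mulrBl -f_eig lap_apply_S big_ord1 mul1n -/sS -/sA; ring.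
Qed.

Lemma one_part_sum_A : (k%:R - lam) * sA = t%:R * sS.
Proof.
rewrite /sA /sum_A mulr_sumr (eq_bigr (fun=> sS)) => [|c _].
  by rewrite sumr_const card_ord mulr_natl.
exact: one_part_eig_A.
Qed.

Lemma one_part_sum_S : ((k + t)%:R - lam) * sS = k%:R * (sS + sA).
Proof.
rewrite {1}/sS /sum_S mulr_sumr (eq_bigr (fun=> sS + sA)) => [|a _].
  by rewrite sumr_const card_ord mulr_natl.
exact: one_part_eig_S.
Qed.

(* Eliminating sA between them. *)
Lemma one_part_sum_S_vanish : lam * (lam - (k + t)%:R) * sS = 0.
Proof.
have -> : lam * (lam - (k + t)%:R) * sS =
  (k%:R - lam) * (((k + t)%:R - lam) * sS - k%:R * (sS + sA))
  + k%:R * ((k%:R - lam) * sA - t%:R * sS) by rewrite natrD; ring.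
by rewrite one_part_sum_A one_part_sum_S !subrr !mulr0 addr0.
Qed.

Let k_neq0 : (k%:R : algC) != 0. Proof. by rewrite pnatr_eq0 -lt0n. Qed.

Lemma one_part_harmonic_const : lam = 0 -> forall x, f x = sS / k%:R.
Proof.
move=> lam0; have sA_E : sA = t%:R * sS / k%:R.
  by rewrite -one_part_sum_A lam0 subr0 mulrC mulKf.
have kt_neq0 : ((k + t)%:R : algC) != 0 by rewrite pnatr_eq0 addn_eq0 negb_and -lt0n k_gt0.
case=> i [a|c]; rewrite ord1; last by rewrite -(one_part_eig_A c) lam0 subr0 mulrC mulKf.
have := one_part_eig_S a; rewrite lam0 subr0 sA_E => eqS.
by apply: (mulfI kt_neq0); rewrite eqS natrD; field.
Qed.

(* An eigenvalue outside {0, k, k + t} forces sS = sA = 0, hence f = 0. *)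
Lemma one_part_eigenfunction_vanish :
  lam \notin [:: 0; k%:R; (k + t)%:R] -> forall x, f x = 0.
Proof.
rewrite !inE !negb_or => /and3P [lam_neq0 lam_neqk lam_neqkt].
have kl : k%:R - lam != 0 by rewrite subr_eq0 eq_sym.
have ktl : (k + t)%:R - lam != 0 by rewrite subr_eq0 eq_sym.
have sS0 : sS = 0.
  have /eqP := one_part_sum_S_vanish.
  by rewrite !mulf_eq0 (negbTE lam_neq0) subr_eq0 (negbTE lam_neqkt) => /eqP.
have sA0 : sA = 0 by apply: (mulfI kl); rewrite one_part_sum_A sS0 !mulr0.
case=> i [a|c]; rewrite ord1.
  by apply: (mulfI ktl); rewrite one_part_eig_S sS0 sA0 addr0 mulr0.
by apply: (mulfI kl); rewrite one_part_eig_A sS0 mulr0.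
Qed.

End OnePartEigenfunction.

Section OnePartSpectrum.
Variables k t : nat.
Hypothesis k_gt0 : (0 < k)%N.
Local Notation V := (split_vertex k t 1).
Local Notation e := (@split_adj k t 1).
Local Notation roots := (lap_roots e).
Let e_sym := @split_sym k t 1.
Let e_irr := @split_irr k t 1.

Lemma one_part_roots lam : lam \in roots -> lam \in [:: 0; k%:R; (k + t)%:R].
Proof.
case/(root_eigenfunction e_sym e_irr) => f f_eig [x]; apply: contraNT => lam_out.
by rewrite (one_part_eigenfunction_vanish f_eig lam_out).
Qed.

Lemma one_part_roots_ge0 lam : lam \in roots -> 0 <= lam.
Proof. by move/one_part_roots; rewrite !inE => /or3P [] /eqP ->; rewrite ?ler0n. Qed.

Lemma one_part_simple_zero : (count_mem (0 : algC)%R roots <= 1)%N.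
Proof.
apply: (simple_zero_root e_sym e_irr) => f f_harm x y.
have f_eig z : lap_apply e f z = 0 * f z by rewrite mul0r f_harm.
by rewrite !(one_part_harmonic_const k_gt0 f_eig).
Qed.

(* The indicator of one vertex of A_1 minus that of another is a
   k-eigenfunction. *)
Lemma one_part_k_root : (1 < t)%N -> k%:R \in roots.
Proof.
move=> t_gt1; pose c0 : 'I_t := Ordinal (ltnW t_gt1); pose c1 : 'I_t := Ordinal t_gt1.
pose f (x : V) : algC := if x.2 is inr c then (c == c0)%:R - (c == c1)%:R else 0.
apply: (eigenfunction_root e_sym e_irr (f := f) (x := (ord0, inr c0))); last first.
  by rewrite /f /= subr0 oner_eq0.
case=> i [a|c]; rewrite ord1.
  rewrite lap_apply_S /sum_S /sum_A /f /= !big1_eq sumrB !sum_indicator.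
  by rewrite !mulr0 !subrr.
by rewrite lap_apply_A /sum_S /f /= big1_eq subr0.
Qed.

(* The second smallest root is neither 0 nor k + t and at most k. *)
Lemma one_part_alg_conn : (1 < t)%N -> alg_conn e = k%:R.
Proof.
move=> t_gt1; rewrite alg_connE.
have roots_real := lap_roots_real e_sym.
have size_gt1 : (1 < size roots)%N by rewrite (size_lap_roots e_sym) card_split_vertex; lia.
have zero_root : 0 \in roots := zero_lap_root e_sym e_irr (ord0, inl (Ordinal k_gt0)).
have k_pos : 0 < k%:R :> algC by rewrite ltr0n.
have le_k := second_smallest_le roots_real zero_root (one_part_k_root t_gt1) k_pos.
have neq0 :=
  second_smallest_neq0 roots_real size_gt1 one_part_roots_ge0 one_part_simple_zero.
have := one_part_roots (second_smallest_mem size_gt1).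
rewrite !inE => /or3P [/eqP second0 | /eqP // | /eqP second_kt].
  by rewrite second0 eqxx in neq0.
by move: le_k; rewrite second_kt ler_nat; lia.
Qed.

End OnePartSpectrum.

(* For r >= 2 the root mu of x^2 - ((r + 1) k + t) x + r k^2 below k is an
   eigenvalue.  With X = (r - 1) k + t the discriminant is X^2 + 4 k t and
   X < sqrt(X^2 + 4 k t) < X + 2 k gives 0 < mu < k. *)
Section ManyParts.
Variables k t r : nat.
Hypotheses (k_gt0 : (0 < k)%N) (t_gt0 : (0 < t)%N) (r_gt1 : (1 < r)%N).
Local Notation V := (split_vertex k t r).
Local Notation e := (@split_adj k t r).

Let X := ((r - 1) * k + t)%N.
Let sqrt_disc : algC := sqrtC (X * X + 4 * k * t)%:R.
Let mu : algC := ((X + 2 * k)%:R - sqrt_disc) / 2.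

Lemma sqrt_disc_gt : X%:R < sqrt_disc.
Proof.
rewrite /sqrt_disc -(sqrCK (ler0n _ X)) ltr_sqrtC ?qualifE /= ?ler0n ?exprn_ge0 //.
by rewrite -natrX ltr_nat; nia.
Qed.

Lemma sqrt_disc_lt : sqrt_disc < (X + 2 * k)%:R.
Proof.
rewrite /sqrt_disc -(sqrCK (ler0n _ (X + 2 * k))).
rewrite ltr_sqrtC ?qualifE /= ?ler0n ?exprn_ge0 //.
by rewrite -natrX ltr_nat /X; nia.
Qed.

Lemma mu_gt0 : 0 < mu.
Proof. by rewrite divr_gt0 ?ltr0n // subr_gt0 sqrt_disc_lt. Qed.

Lemma mu_lt_k : mu < k%:R.
Proof.
have -> : mu = k%:R - (sqrt_disc - X%:R) / 2 by rewrite /mu natrD natrM; field.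
by rewrite gtrBl divr_gt0 ?ltr0n // subr_gt0 sqrt_disc_gt.
Qed.

(* mu is a root of the quadratic, written in the form used by lap_apply_S. *)
Lemma mu_quadratic :
  (r%:R * k%:R + t%:R) * (k%:R - mu) - t%:R * k%:R = mu * (k%:R - mu).
Proof.
have X_E : X%:R = (r%:R - 1) * k%:R + t%:R :> algC.
  by rewrite /X natrD natrM natrB ?(ltnW r_gt1).
have disc_E : sqrt_disc ^+ 2 = X%:R * X%:R + 4 * k%:R * t%:R.
  by rewrite /sqrt_disc sqrtCK natrD !natrM.
apply/eqP; rewrite -subr_eq0; apply/eqP.
transitivity ((sqrt_disc ^+ 2 - (X%:R * X%:R + 4 * k%:R * t%:R)) / 4).
  by rewrite /mu natrD natrM X_E; field.
by rewrite disc_E subrr mul0r.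
Qed.

Let i0 : 'I_r := Ordinal (ltnW r_gt1).
Let i1 : 'I_r := Ordinal r_gt1.
Let delta (j : 'I_r) : algC := (j == i0)%:R - (j == i1)%:R.
Let c0 : 'I_t := Ordinal t_gt0.

Lemma sum_delta : \sum_j delta j = 0.
Proof. by rewrite sumrB !sum_indicator subrr. Qed.

(* The eigenfunction: (k - mu) delta i on S_i and k delta i on A_i.  Since
   delta sums to zero, the clique vertices contribute nothing in common, and
   on S_i the eigenvalue equation is mu_quadratic times delta i. *)
Lemma mu_root : mu \in lap_roots e.
Proof.
pose f (x : V) : algC :=
  if x.2 is inl _ then (k%:R - mu) * delta x.1 else k%:R * delta x.1.
apply: (eigenfunction_root (@split_sym k t r) (@split_irr k t r)
         (f := f) (x := (i0, inr c0))).
  case=> i [a|c]; last first.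
    by rewrite lap_apply_A /sum_S /f /= sumr_const card_ord -mulr_natl; ring.
  rewrite lap_apply_S.
  have -> : \sum_j sum_S f j = 0.
    rewrite (eq_bigr (fun j => k%:R * ((k%:R - mu) * delta j))) => [|j _]; last first.
      by rewrite /sum_S /f /= sumr_const card_ord mulr_natl.
    by rewrite -!mulr_sumr sum_delta !mulr0.
  rewrite /sum_A /f /= sumr_const card_ord -mulr_natl natrD natrM.
  have := mu_quadratic; move: (delta i) => D Q.
  apply/eqP; rewrite -subr_eq0; apply/eqP.
  transitivity (((r%:R * k%:R + t%:R) * (k%:R - mu) - t%:R * k%:R - mu * (k%:R - mu)) * D).
    by ring.
  by rewrite Q subrr mul0r.
by rewrite /f /delta /= subr0 mulr1 pnatr_eq0 -lt0n.
Qed.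

Lemma many_parts_alg_conn_lt : alg_conn e < k%:R.
Proof.
have zero_root := zero_lap_root (@split_sym k t r) (@split_irr k t r) (i0, inr c0).
rewrite alg_connE; apply: (le_lt_trans _ mu_lt_k).
exact: (second_smallest_le (lap_roots_real (@split_sym k t r)) zero_root mu_root mu_gt0).
Qed.

End ManyParts.

Unset Implicit Arguments.

Theorem mainTheorem8 (k t r : nat) (hk : (1 <= k)%N) (ht : (1 <= t)%N)
    (hr : (1 <= r)%N) :
  ((r == 1%N) && (2 <= t)%N ->
     alg_conn (@split_adj k t r) = (vconn (@split_adj k t r))%:R) /\
  ((2 <= r)%N ->
     alg_conn (@split_adj k t r) <> (vconn (@split_adj k t r))%:R).
Proof.
rewrite (split_vconn hk ht hr); split.
- by case/andP => /eqP r1 t_gt1; subst r; exact: one_part_alg_conn.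
- by move=> r_gt1; apply/eqP; rewrite lt_eqF // many_parts_alg_conn_lt.
Qed.
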